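(* Let $R$ be a ring and $\mathfrak p\subset R$ a prime ideal. If $R$ is purely $F$-regular along $\mathfrak p$, then the polynomial ring $R[t]$ is purely $F$-regular along the prime ideal $\mathfrak p[t]=\mathfrak pR[t]$.
   Context: All rings are noetherian $F$-finite commutative $\mathbb F_p$-algebras. $F^e_*R$ is $R$ viewed as an $R$-module via $r\mapsto r^{p^e}$; $\mathcal C_{e,R}=\operatorname{Hom}_R(F^e_*R,R)$. For an ideal $\mathfrak a$, $\phi\in\mathcal C_{e,R}$ is $\mathfrak a$-compatible if $\phi(F^e_*\mathfrak a)\subseteq\mathfrak a$. For a prime $\mathfrak p\subset R$, $R$ is purely $F$-regular along $\mathfrak p$ if (i) there exist $e>0$ and a $\mathfrak p$-compatible $\phi\in\mathcal C_{e,R}$ with $\phi(F^e_*R)\not\subseteq\mathfrak p$, and (ii) every proper ideal $\mathfrak b\subsetneq R$ that is $\phi$-compatible for every $e>0$ and every $\mathfrak p$-compatible $\phi\in\mathcal C_{e,R}$ satisfies $\mathfrak b\subseteq\mathfrak p$. *)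

From HB Require Import structures.
From mathcomp Require Import all_boot all_order all_algebra.
Set Implicit Arguments. Unset Strict Implicit. Unset Printing Implicit Defensive.
Import GRing.Theory.
Local Open Scope ring_scope.

Definition is_ideal (R : comNzRingType) (I : R -> Prop) : Prop :=
  I 0 /\ (forall x y, I x -> I y -> I (x + y)) /\ (forall r x, I x -> I (r * x)).

Definition proper_ideal (R : comNzRingType) (I : R -> Prop) : Prop :=
  is_ideal I /\ ~ I 1.

Definition prime_ideal (R : comNzRingType) (I : R -> Prop) : Prop :=
  proper_ideal I /\ (forall x y, I (x * y) -> I x \/ I y).

Definition fin_gen_ideal (R : comNzRingType) (I : R -> Prop) : Prop :=
  exists s : seq R, forall x, I x <->
    exists c : seq R, x = \sum_(i < size s) c`_i * s`_i.

Definition noetherian (R : comNzRingType) : Prop :=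
  forall I : R -> Prop, is_ideal I -> fin_gen_ideal I.

(* F-finite: F_* R is a finitely generated R-module
   (the R-action on F_* R being r . x = r^p x). *)
Definition F_finite (p : nat) (R : comNzRingType) : Prop :=
  exists s : seq R, forall x : R,
    exists c : seq R, x = \sum_(i < size s) (c`_i) ^+ p * s`_i.

(* phi is an element of C_{e,R} = Hom_R(F^e_* R, R) *)
Definition cartier_map (p e : nat) (R : comNzRingType) (phi : R -> R) : Prop :=
  (forall x y, phi (x + y) = phi x + phi y) /\
  (forall r x, phi (r ^+ (p ^ e) * x) = r * phi x).

Definition compatible (R : comNzRingType) (I : R -> Prop) (phi : R -> R) : Prop :=
  forall x, I x -> I (phi x).

Definition purely_F_regular_along (p : nat) (R : comNzRingType) (P : R -> Prop) : Prop :=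
  prime_ideal P /\
  (exists (e : nat) (phi : R -> R), (0 < e)%N /\ cartier_map p e phi /\
      compatible P phi /\ exists x, ~ P (phi x)) /\
  (forall b : R -> Prop, proper_ideal b ->
     (forall (e : nat) (phi : R -> R), (0 < e)%N -> cartier_map p e phi ->
        compatible P phi -> compatible b phi) ->
     forall x, b x -> P x).

(* the extended ideal P[t] = P R[t]: polynomials with all coefficients in P *)
Definition poly_ext (R : comNzRingType) (P : R -> Prop) : {poly R} -> Prop :=
  fun q => forall i : nat, P q`_i.

From Pilot Require Import Defs.
From HB Require Import structures.
From mathcomp Require Import all_boot all_order all_algebra.
From Stdlib Require Import Classical.
Set Implicit Arguments. Unset Strict Implicit. Unset Printing Implicit Defensive.
Import GRing.Theory.
Local Open Scope ring_scope.

(* A P-compatible Cartier map phi of level e lifts to R[t] by reading off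
   one residue class of exponents modulo q = p^e:
   sum_k a_k t^k |-> sum_k phi(a_(kq+j)) t^k.  These lifts are P[t]-compatible,
   and on constants (j = 0) they restrict to phi, which gives the splitting
   condition for P[t] and shows that the contraction to R of any ideal b of
   R[t] stable under all P[t]-compatible maps lies in P.  For f in b, the lift
   with j = i of any map of level e >= deg f sends s f to the constant
   phi(s f_i), so f_i is sent into P by every P-compatible map of level at
   least deg f.  Pure F-regularity of R along P forces such f_i into P: the
   elements with this property form an ideal stable under all P-compatible
   maps, and it is proper because P-compatible maps not landing in P exist at
   arbitrarily large levels. *)

Lemma exprD_pcharX (R : comNzRingType) p e (x y : R) : p \in [pchar R] ->
  (x + y) ^+ (p ^ e) = x ^+ (p ^ e) + y ^+ (p ^ e).
Proof.
move=> hp; apply: exprDn_pchar.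
by rewrite (eq_pnat _ (pcharf_eq hp)) pnatX pnat_id ?(pcharf_prime hp) ?orbT.
Qed.

Section CartierMaps.
Variables (R : comNzRingType) (p : nat).

Lemma cartier_map0 e (phi : R -> R) : cartier_map p e phi -> phi 0 = 0.
Proof. by case=> phiD _; apply: (@addrI _ (phi 0)); rewrite -phiD !addr0. Qed.

Lemma cartier_map_comp e e' (phi psi : R -> R) :
  cartier_map p e phi -> cartier_map p e' psi ->
  cartier_map p (e + e') (fun x => phi (psi x)).
Proof.
move=> [phiD phiZ] [psiD psiZ]; split; first by move=> x y; rewrite psiD phiD.
by move=> r x; rewrite expnD exprM psiZ phiZ.
Qed.

Definition uniformly_compatible (P b : R -> Prop) : Prop :=
  forall e (phi : R -> R), (0 < e)%N -> cartier_map p e phi ->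
    compatible P phi -> compatible b phi.

End CartierMaps.

Lemma ideal_sum (R : comNzRingType) (P : R -> Prop) (I : Type) (r : seq I)
    (F : I -> R) :
  is_ideal P -> (forall i, P (F i)) -> P (\sum_(i <- r) F i).
Proof.
move=> [P0 [PD _]] PF; elim: r => [|x r IH]; first by rewrite big_nil.
by rewrite big_cons; apply: PD.
Qed.

Section ExtendedIdeal.
Variables (R : comNzRingType) (P : R -> Prop).

Lemma poly_ext_ideal : is_ideal P -> is_ideal (poly_ext P).
Proof.
move=> P_ideal; have [P0 [PD PM]] := P_ideal.
split; first by move=> i; rewrite coef0.
split; first by move=> f g Pf Pg i; rewrite coefD; apply: PD.
by move=> f g Pg i; rewrite coefM; apply: ideal_sum => // k; apply: PM.
Qed.

Lemma ex_first_coef_notin (f : {poly R}) : ~ poly_ext P f ->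
  exists i, ~ P f`_i /\ forall m, (m < i)%N -> P f`_m.
Proof.
move=> fNP; have [i Nfi] : exists i, ~ P f`_i.
  by apply: NNPP => h; apply: fNP => i; apply: NNPP => Nfi; apply: h; exists i.
elim/ltn_ind: i Nfi => i IH Nfi.
case: (classic (forall m, (m < i)%N -> P f`_m)) => [fmin | /not_all_ex_not [m]].
  by exists i.
by move=> hm; have [mi Nfm] := imply_to_and _ _ hm; apply: IH mi Nfm.
Qed.

(* The terms of (f g)_(i+j) other than f_i g_j all involve a coefficient
   below i of f or below j of g. *)
Lemma coefM_first_notin (f g : {poly R}) i j : is_ideal P ->
  (forall m, (m < i)%N -> P f`_m) -> (forall m, (m < j)%N -> P g`_m) ->
  P (f * g)`_(i + j) -> P (f`_i * g`_j).
Proof.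
move=> P_ideal fmin gmin; have [P0 [PD PM]] := P_ideal.
rewrite coefM (bigD1 (inord i)) //= inordK ?ltnS ?leq_addr // addKn => Psum.
have Prest : P (\sum_(k < (i + j).+1 | k != inord i) f`_k * g`_(i + j - k)).
  rewrite big_mkcond /=; apply: ideal_sum => // k; case: ifP => [kNi | _]; last exact: P0.
  have {}kNi : (k : nat) != i.
    by apply: contra_neq kNi => ki; apply/val_inj; rewrite /= inordK ?ki // ltnS leq_addr.
  case: (ltngtP k i) kNi => // [ki | ik] _; first by rewrite mulrC; apply/PM/fmin.
  by apply/PM/gmin; rewrite ltn_subLR ?ltn_add2r // -ltnS.
by have := PD _ _ Psum (PM (-1) _ Prest); rewrite mulN1r addrK.
Qed.

Lemma poly_ext_prime : prime_ideal P -> prime_ideal (poly_ext P).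
Proof.
move=> [[P_ideal P1] P_prime].
split; first split; first exact: poly_ext_ideal.
  by move=> P1t; apply: P1; have := P1t 0%N; rewrite coef1.
move=> f g Pfg; apply: NNPP => /not_or_and [/ex_first_coef_notin [i [Nfi fmin]]
  /ex_first_coef_notin [j [Ngj gmin]]].
by case: (P_prime _ _ (coefM_first_notin P_ideal fmin gmin (Pfg _))).
Qed.

End ExtendedIdeal.

Definition poly_cartier (R : comNzRingType) (q j : nat) (phi : R -> R)
    (g : {poly R}) : {poly R} :=
  \poly_(k < size g) phi g`_(k * q + j).

Section PolyCartier.
Variables (R : comNzRingType) (p e : nat) (phi : R -> R).
Hypotheses (hp : p \in [pchar R]) (phi_cartier : cartier_map p e phi).

Local Notation q := (p ^ e)%N.

Lemma pcharX_gt0 : (0 < q)%N.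
Proof. by rewrite expn_gt0 prime_gt0 ?(pcharf_prime hp). Qed.

Lemma coef_poly_cartier j (g : {poly R}) k : (poly_cartier q j phi g)`_k = phi g`_(k * q + j).
Proof.
rewrite coef_poly; case: ltnP => // gk; rewrite nth_default ?(cartier_map0 phi_cartier) //.
by rewrite (leq_trans gk) // (leq_trans (leq_pmulr _ pcharX_gt0)) ?leq_addr.
Qed.

Lemma poly_cartierD j (g h : {poly R}) :
  poly_cartier q j phi (g + h) = poly_cartier q j phi g + poly_cartier q j phi h.
Proof.
by apply/polyP => k; rewrite coefD !coef_poly_cartier coefD (proj1 phi_cartier).
Qed.

Lemma poly_cartierXnM j (g : {poly R}) : (j < q)%N ->
  poly_cartier q j phi ('X^q * g) = 'X * poly_cartier q j phi g.
Proof.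
move=> jq; apply/polyP => -[|k]; rewrite coefXM coef_poly_cartier coefXnM /=.
  by rewrite mul0n add0n jq (cartier_map0 phi_cartier).
by rewrite coef_poly_cartier mulSn -addnA addKn ltnNge leq_addr.
Qed.

Lemma poly_cartierCM j c (g : {poly R}) :
  poly_cartier q j phi ((c ^+ q)%:P * g) = c%:P * poly_cartier q j phi g.
Proof.
by apply/polyP => k; rewrite coefCM !coef_poly_cartier coefCM (proj2 phi_cartier).
Qed.

Lemma poly_cartier_map j : (j < q)%N -> cartier_map p e (poly_cartier q j phi).
Proof.
move=> jq; split; first exact: poly_cartierD.
have hpt : p \in [pchar {poly R}] by rewrite pchar_poly.
move=> h g; elim/poly_ind: h g => [|h c IH] g.
  rewrite expr0n eqn0Ngt pcharX_gt0 !mul0r.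
  by apply/polyP => k; rewrite coef_poly_cartier !coef0 (cartier_map0 phi_cartier).
rewrite exprD_pcharX // exprMn -rmorphXn !mulrDl poly_cartierD poly_cartierCM.
by rewrite -mulrA IH poly_cartierXnM // mulrA.
Qed.

Lemma poly_cartier_compatible (P : R -> Prop) j :
  compatible P phi -> compatible (poly_ext P) (poly_cartier q j phi).
Proof. by move=> phiP g Pg i; rewrite coef_poly_cartier; apply: phiP. Qed.

Lemma poly_cartier_small j (g : {poly R}) : (size g <= q)%N ->
  poly_cartier q j phi g = (phi g`_j)%:P.
Proof.
move=> gq; apply/polyP => -[|k]; rewrite coef_poly_cartier coefC //=.
rewrite nth_default ?(cartier_map0 phi_cartier) // (leq_trans gq) //.
by rewrite mulSn -addnA leq_addr.
Qed.

Lemma poly_cartierC a : poly_cartier q 0 phi a%:P = (phi a)%:P.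
Proof.
rewrite poly_cartier_small ?coefC //.
exact: leq_trans (size_polyC_leq1 a) pcharX_gt0.
Qed.

End PolyCartier.

Section CartierCore.
Variables (R : comNzRingType) (p : nat) (P : R -> Prop).

(* The lower bound n on the level is what makes [cartier_core] usable over
   R[t]: the lifts [poly_cartier] isolate a single coefficient of f only once
   p^e exceeds deg f. *)
Definition cartier_core (n : nat) (y : R) : Prop :=
  forall e (phi : R -> R), (n <= e)%N -> (0 < e)%N -> cartier_map p e phi ->
    compatible P phi -> forall s, P (phi (s * y)).

Definition escaping_cartier_map (n : nat) : Prop :=
  exists e (phi : R -> R) x, [/\ (n <= e)%N, (0 < e)%N, cartier_map p e phi,
    compatible P phi & ~ P (phi x)].

Lemma cartier_core_ideal n : is_ideal P -> is_ideal (cartier_core n).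
Proof.
move=> [P0 [PD _]]; split.
  by move=> e phi _ _ phi_cartier _ s; rewrite mulr0 (cartier_map0 phi_cartier).
split=> [x y Cx Cy | r x Cx] e phi ne e0 phi_cartier phiP s.
  rewrite mulrDr (proj1 phi_cartier).
  by apply: PD; [exact: Cx ne e0 phi_cartier phiP s | exact: Cy ne e0 phi_cartier phiP s].
by rewrite mulrA; exact: Cx ne e0 phi_cartier phiP _.
Qed.

Lemma cartier_core_uniformly_compatible n :
  uniformly_compatible p P (cartier_core n).
Proof.
move=> e' psi e'0 psi_cartier psiP y Cy e phi ne e0 phi_cartier phiP s.
rewrite -(proj2 psi_cartier).
apply: (Cy (e + e')%N (fun x => phi (psi x))).
- exact: leq_trans ne (leq_addr _ _).
- by rewrite addn_gt0 e0.
- exact: cartier_map_comp.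
- by move=> x Px; apply/phiP/psiP.
Qed.

Hypothesis P_regular : purely_F_regular_along p P.

Lemma cartier_core_sub_escaping n y :
  escaping_cartier_map n -> cartier_core n y -> P y.
Proof.
have [[[P_ideal _] _] [_ P_min]] := P_regular.
move=> [e [phi [x [ne e0 phi_cartier phiP Nphix]]]]; apply: P_min.
  split; first exact: cartier_core_ideal.
  by move=> C1; apply: Nphix; have := C1 e phi ne e0 phi_cartier phiP x; rewrite mulr1.
exact: cartier_core_uniformly_compatible.
Qed.

(* An escaping phi of level >= n has phi x outside P, hence outside the core,
   so some psi of level >= n has psi (s * phi x) outside P; the composite
   psi o phi then escapes at level >= n + 1. *)
Lemma escaping_cartier_map_ge n : escaping_cartier_map n.
Proof.
elim: n => [|n IH].
  have [_ [[e [phi [e0 [phi_cartier [phiP [x Nphix]]]]]] _]] := P_regular.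
  by exists e, phi, x.
have [e [phi [x [ne e0 phi_cartier phiP Nphix]]]] := IH.
have NCphix : ~ cartier_core n (phi x) by move/(cartier_core_sub_escaping IH).
apply: NNPP => Nesc; apply: NCphix => e' psi ne' e'0 psi_cartier psiP s.
apply: NNPP => Npsi; apply: Nesc.
exists (e' + e)%N, (fun z => psi (phi z)), (s ^+ (p ^ e) * x); split.
- by rewrite -addn1 leq_add.
- by rewrite addn_gt0 e'0.
- exact: cartier_map_comp.
- by move=> z Pz; apply/psiP/phiP.
- by rewrite (proj2 phi_cartier).
Qed.

Lemma cartier_core_sub n y : cartier_core n y -> P y.
Proof. exact/cartier_core_sub_escaping/escaping_cartier_map_ge. Qed.

End CartierCore.

Section PolyRegular.
Variables (R : comNzRingType) (p : nat) (P : R -> Prop) (b : {poly R} -> Prop).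
Hypotheses (hp : p \in [pchar R]) (P_regular : purely_F_regular_along p P).
(* Qualified because ssralg also defines [proper_ideal]. *)
Hypotheses (b_proper : Defs.proper_ideal b)
  (b_compatible : uniformly_compatible p (poly_ext P) b).

Lemma polyC_contraction_sub a : b a%:P -> P a.
Proof.
have [_ [_ P_min]] := P_regular; have [[b0 [bD bM]] Nb1] := b_proper.
apply: (P_min (fun a => b a%:P)).
  split; last by rewrite polyC1.
  split; first by rewrite polyC0.
  by split=> [u v bu bv | r u bu]; [rewrite polyCD; apply: bD | rewrite polyCM; apply: bM].
move=> e phi e0 phi_cartier phiP c bc.
have := b_compatible e0 (poly_cartier_map hp phi_cartier (pcharX_gt0 e hp))
  (poly_cartier_compatible hp phi_cartier 0 phiP) bc.
by rewrite poly_cartierC.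
Qed.

Lemma coef_cartier_core f i : b f -> cartier_core p P (size f) f`_i.
Proof.
have [[_ [_ bM]] _] := b_proper.
move=> bf e phi fe e0 phi_cartier phiP s.
have fq : (size f < p ^ e)%N.
  exact: leq_ltn_trans fe (ltn_expl e (prime_gt1 (pcharf_prime hp))).
have [iq | qi] := ltnP i (p ^ e); last first.
  have [[[[P0 _] _] _] _] := P_regular.
  by rewrite nth_default ?mulr0 ?(cartier_map0 phi_cartier) // (leq_trans (ltnW fq)).
apply: polyC_contraction_sub.
have := b_compatible e0 (poly_cartier_map hp phi_cartier iq)
  (poly_cartier_compatible hp phi_cartier i phiP) (bM s%:P _ bf).
rewrite poly_cartier_small ?coefCM // mul_polyC.
exact: leq_trans (size_scale_leq _ _) (ltnW fq).
Qed.

End PolyRegular.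

Theorem proposition2p15 (p : nat) (R : comNzRingType) (P : R -> Prop) :
  (p \in [pchar R])%R -> noetherian R -> F_finite p R ->
  purely_F_regular_along p P ->
  purely_F_regular_along p (poly_ext P).
Proof.
move=> hp _ _ P_regular.
have [P_prime [[e [phi [e0 [phi_cartier [phiP [x Nphix]]]]]] _]] := P_regular.
split; first exact: poly_ext_prime.
split.
  exists e, (poly_cartier (p ^ e) 0 phi); split=> //; split.
    exact: (poly_cartier_map hp phi_cartier (pcharX_gt0 e hp)).
  split; first exact: poly_cartier_compatible.
  by exists x%:P; rewrite (poly_cartierC hp phi_cartier) => /(_ 0%N); rewrite coefC.
move=> b b_proper b_compatible f bf i.
exact/(cartier_core_sub P_regular)/(coef_cartier_core hp P_regular b_proper b_compatible).
Qed.
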